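(* Let $\lambda$ be a partition with $n$ parts and let $\beta \in U_\lambda(n)$. If $\beta \notin UBP_\lambda(n)$, then the terminal pair $(\lambda,\beta)$ is not nonpermutable; i.e. there is a permutation $\pi \neq (1,\dots,n)$ of $[n]$ with $\mathcal{LD}_\lambda(\beta;\pi) \neq \emptyset$.
   Context: Fix an integer $n \geq 1$ and write $[k] = \{1,\dots,k\}$. A partition is $\lambda = (\lambda_1,\dots,\lambda_n)$ with $\lambda_1 \geq \dots \geq \lambda_n \geq 0$ integers. Let $R_\lambda \subseteq [n-1]$ be the set of $q \in [n-1]$ with $\lambda_q > \lambda_{q+1}$; write its elements $q_1 < \dots < q_r$, and set $q_0 := 0$, $q_{r+1} := n$. For $h \in [r+1]$ the $h$-th carrel is the index interval $\{q_{h-1}+1,\dots,q_h\}$. A $\lambda$-tuple is an $n$-tuple $\beta$ with entries in $[n]$, considered with this carrel structure; it is upper if $\beta_i \geq i$ for all $i$. $U_\lambda(n)$ is the set of upper $\lambda$-tuples. Critical indices: for $\beta \in U_\lambda(n)$ and $h \in [r+1]$, set $x_1 := q_h$; given $x_{u-1}$, if some index $x$ with $q_{h-1} < x < x_{u-1}$ satisfies $\beta_{x_{u-1}} - \beta_x > x_{u-1} - x$, let $x_u$ be the largest such $x$, otherwise stop. The $x_u$ are the critical indices of $\beta$ in carrel $h$. For $i \in [n]$ let $x(i)$ be the smallest critical index in the carrel of $i$ with $x(i) \geq i$. The $\lambda$-platform is $\Xi_\lambda(\beta) := \xi$ with $\xi_i := \beta_{x(i)}$. $UBP_\lambda(n)$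 is the set of $\beta \in U_\lambda(n)$ with $\beta_i \leq \Xi_\lambda(\beta)_i$ for all $i$. Lattice paths: lattice points are integer pairs $(a,b)$ with $a \geq 0$, $b \geq 1$. A lattice path is a sequence of lattice points each consecutive step of which is $(a,b) \to (a+1,b)$ (easterly) or $(a,b) \to (a,b+1)$ (southerly). An $n$-path is $(\Lambda_1,\dots,\Lambda_n)$ with $\Lambda_m$ a lattice path starting at $(n-m,m)$. The terminals of $(\lambda,\beta)$ are $P_m := (\lambda_m + n - m, \beta_m)$, $m \in [n]$. For a permutation $\pi$ of $[n]$, $\mathcal{LD}_\lambda(\beta;\pi)$ is the set of $n$-paths with $\Lambda_m$ ending at $P_{\pi_m}$ for every $m$ and with no two distinct components sharing a lattice point. The pair $(\lambda,\beta)$ is nonpermutable if $\mathcal{LD}_\lambda(\beta;\pi) = \emptyset$ for every permutation $\pi \neq (1,\dots,n)$. *)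

(* All objects are 1-based, as in the paper:
   lam, beta : nat -> nat, only the values at indices 1..n matter. *)
From mathcomp Require Import all_boot.
Set Implicit Arguments. Unset Strict Implicit. Unset Printing Implicit Defensive.

Definition is_partition (n : nat) (lam : nat -> nat) : Prop :=
  forall i, 1 <= i -> i < n -> lam i.+1 <= lam i.

Definition upper_tuple (n : nat) (beta : nat -> nat) : Prop :=
  forall i, 1 <= i <= n -> i <= beta i /\ beta i <= n.

(* q in R_lam iff q in [n-1] and lam_q > lam_{q+1}. *)
(* lower end q_{h-1} of the carrel containing i (0 if none). *)
Definition carrel_lo (lam : nat -> nat) (i : nat) : nat :=
  \max_(q < i | (0 < q) && (lam q.+1 < lam q)) q.

(* upper end q_h of the carrel containing i (n if none). *)
Definition carrel_hi (n : nat) (lam : nat -> nat) (i : nat) : nat :=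
  \big[minn/n]_(i <= q < n | lam q.+1 < lam q) q.

Definition next_crit (beta : nat -> nat) (lo y : nat) : option nat :=
  let P := fun x => beta x + (y - x) < beta y in
  let cands := iota lo.+1 (y - lo.+1) in
  if has P cands then Some (last 0 (filter P cands)) else None.

(* the sequence x_1 = y, x_2, ... of critical indices
   (fuel f; the chain strictly decreases and stays above lo, so fuel y suffices) *)
Fixpoint crit_chain (beta : nat -> nat) (lo y f : nat) : seq nat :=
  y :: (if f is f'.+1 then
          (if next_crit beta lo y is Some x then crit_chain beta lo x f' else [::])
        else [::]).

Definition crit_indices (n : nat) (lam beta : nat -> nat) (i : nat) : seq nat :=
  crit_chain beta (carrel_lo lam i) (carrel_hi n lam i) (carrel_hi n lam i).

(* x(i): smallest critical index in the carrel of i with x(i) >= i *)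
Definition xidx (n : nat) (lam beta : nat -> nat) (i : nat) : nat :=
  last (carrel_hi n lam i) [seq x <- crit_indices n lam beta i | i <= x].

Definition platform (n : nat) (lam beta : nat -> nat) (i : nat) : nat :=
  beta (xidx n lam beta i).

Definition in_UBP (n : nat) (lam beta : nat -> nat) : Prop :=
  forall i, 1 <= i <= n -> beta i <= platform n lam beta i.

(* lattice paths: points (a,b), a >= 0, b >= 1; steps east or south *)
Definition lstep (p q : nat * nat) : bool :=
  ((q.1 == p.1.+1) && (q.2 == p.2)) || ((q.1 == p.1) && (q.2 == p.2.+1)).

Definition lattice_path (s e : nat * nat) (P : seq (nat * nat)) : Prop :=
  exists t, P = s :: t /\ path lstep s t /\ last s t = e /\ all (fun p => 0 < p.2) P.

Definition terminal (n : nat) (lam beta : nat -> nat) (m : nat) : nat * nat :=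
  (lam m + n - m, beta m).

Definition is_perm (n : nat) (pi : nat -> nat) : Prop :=
  (forall m, 1 <= m <= n -> 1 <= pi m <= n) /\
  (forall m m', 1 <= m <= n -> 1 <= m' <= n -> pi m = pi m' -> m = m').

Definition in_LD (n : nat) (lam beta pi : nat -> nat)
    (Lam : nat -> seq (nat * nat)) : Prop :=
  (forall m, 1 <= m <= n -> lattice_path (n - m, m) (terminal n lam beta (pi m)) (Lam m)) /\
  (forall m m', 1 <= m <= n -> 1 <= m' <= n -> m <> m' ->
     forall p, p \in Lam m -> p \notin Lam m').

From Stdlib Require Import Classical.
From mathcomp Require Import all_boot zify.
Set Implicit Arguments. Unset Strict Implicit. Unset Printing Implicit Defensive.

(* Take i with Xi(beta)_i < beta_i, let x = x(i) > i be its critical index, h the end of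
   the carrel of i, and m the last index of [i, x) with beta_m > beta_x.  Then lam is
   constant on [m, h], beta_y <= beta_x on (m, x), beta_z - beta_x > z - x on (x, h]
   (x is critical), and these inequalities force h < n.  The cycle sending y to y + 1
   on [m, x) and x to m admits nonintersecting paths: a row y in [m, x) stops one column
   early and descends to beta_(y+1) <= beta_x; row x descends to row beta_x + 1, passing
   below all of them, and runs east to the column of P_m; a row y in (x, h] descends one
   column early to row beta_x + 1 + (y - x), steps east and descends to beta_y, which the
   critical inequality keeps below; every other row goes straight to its own terminal. *)

Fixpoint east_run (p : nat * nat) (k : nat) : seq (nat * nat) :=
  if k is k'.+1 then (p.1.+1, p.2) :: east_run (p.1.+1, p.2) k' else [::].

Fixpoint south_run (p : nat * nat) (k : nat) : seq (nat * nat) :=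
  if k is k'.+1 then (p.1, p.2.+1) :: south_run (p.1, p.2.+1) k' else [::].

Lemma east_run_path p k : path lstep p (east_run p k).
Proof. by elim: k p => [|k IH] [a b] //=; rewrite IH /lstep /= !eqxx. Qed.

Lemma south_run_path p k : path lstep p (south_run p k).
Proof. by elim: k p => [|k IH] [a b] //=; rewrite IH /lstep /= !eqxx orbT. Qed.

Lemma last_east_run p k : last p (east_run p k) = (p.1 + k, p.2).
Proof. by elim: k p => [|k IH] [a b] /=; rewrite ?addn0 // IH addSnnS. Qed.

Lemma last_south_run p k : last p (south_run p k) = (p.1, p.2 + k).
Proof. by elim: k p => [|k IH] [a b] /=; rewrite ?addn0 // IH addSnnS. Qed.

Lemma mem_east_run p k q : q \in east_run p k -> q.2 = p.2 /\ p.1 < q.1 <= p.1 + k.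
Proof.
elim: k p => [|k IH] [a b] //=.
by rewrite inE => /orP[/eqP -> | /IH /= [-> ?]] /=; lia.
Qed.

Lemma mem_south_run p k q : q \in south_run p k -> q.1 = p.1 /\ p.2 < q.2 <= p.2 + k.
Proof.
elim: k p => [|k IH] [a b] //=.
by rewrite inE => /orP[/eqP -> | /IH /= [-> ?]] /=; lia.
Qed.

Definition staircase (s : nat * nat) (c r : nat) (e : nat * nat) : seq (nat * nat) :=
  s :: east_run s (c - s.1) ++ south_run (c, s.2) (r - s.2)
    ++ east_run (c, r) (e.1 - c) ++ south_run (e.1, r) (e.2 - r).

Section Staircase.

Variables (s e : nat * nat) (c r : nat).
Hypotheses (s_le_c : s.1 <= c) (c_le_e : c <= e.1) (s_le_r : s.2 <= r) (r_le_e : r <= e.2).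

Lemma mem_staircase (q : nat * nat) : q \in staircase s c r e ->
  [\/ q.2 = s.2 /\ s.1 <= q.1 <= c, q.1 = c /\ s.2 <= q.2 <= r,
      q.2 = r /\ c <= q.1 <= e.1 | q.1 = e.1 /\ r <= q.2 <= e.2].
Proof.
rewrite inE !mem_cat.
case/orP => [/eqP -> | ]; first by constructor 1; lia.
case/orP => [/mem_east_run /= ? | ]; first by constructor 1; lia.
case/orP => [/mem_south_run /= ? | ]; first by constructor 2; lia.
by case/orP => [/mem_east_run /= ? | /mem_south_run /= ?]; [constructor 3 | constructor 4]; lia.
Qed.

Lemma staircase_lattice_path : 0 < s.2 -> lattice_path s e (staircase s c r e).
Proof.
move=> s_gt0; eexists; split; first reflexivity.
have cE : s.1 + (c - s.1) = c by lia.
have rE : s.2 + (r - s.2) = r by lia.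
have e1E : c + (e.1 - c) = e.1 by lia.
have e2E : r + (e.2 - r) = e.2 by lia.
split; [|split].
- rewrite !cat_path !last_east_run /= cE !last_south_run /= rE !last_east_run /= e1E.
  by rewrite !east_run_path !south_run_path.
- rewrite !last_cat !last_east_run /= cE !last_south_run /= rE !last_east_run /= e1E.
  by rewrite last_south_run /= e2E -surjective_pairing.
- by apply/allP => q /mem_staircase[] /=; lia.
Qed.

End Staircase.

(* Sufficient for a staircase (c', r', e') starting strictly below (c, r, e) to avoid it:
   it ends west of column c; or it reaches column c only below row r, after the other one
   has left that column for good; or it stays west of column c until the other has ended. *)
Definition stairs_separated (c r : nat) (e : nat * nat) (c' r' : nat) (e' : nat * nat) :=
  e'.1 < c \/ (c' < e'.1 /\ e'.1 = c /\ c < e.1 /\ r < r') \/ (c' < c /\ e.2 < r').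

Lemma staircase_disjoint s c r e s' c' r' e' (q : nat * nat) :
  s.1 <= c <= e.1 -> s.2 <= r <= e.2 -> s'.1 <= c' <= e'.1 -> s'.2 <= r' <= e'.2 ->
  s.2 < s'.2 -> stairs_separated c r e c' r' e' ->
  q \in staircase s c r e -> q \notin staircase s' c' r' e'.
Proof.
move=> /andP[sc ce] /andP[sr re] /andP[sc' ce'] /andP[sr' re'] s_lt sep.
move=> /(mem_staircase sc ce sr re) q_in; apply/negP => /(mem_staircase sc' ce' sr' re') q_in'.
by move: sep; rewrite /stairs_separated; case: q_in => -[]; case: q_in' => -[]; lia.
Qed.

Lemma partition_mono n lam : is_partition n lam ->
  forall a b, 1 <= a <= b -> b <= n -> lam b <= lam a.
Proof.
move=> lamP a; elim=> [|b IH] ab b_le; first lia.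
have [a_le_b|] := leqP a b; last by move=> ?; have -> : a = b.+1 by lia.
by have := IH (ltac:(lia)) (ltac:(lia)); have := lamP b (ltac:(lia)) (ltac:(lia)); lia.
Qed.

Lemma carrel_hi_spec n lam i : i <= n ->
  [/\ i <= carrel_hi n lam i <= n,
      forall q, i <= q < carrel_hi n lam i -> lam q <= lam q.+1
    & carrel_hi n lam i < n -> lam (carrel_hi n lam i).+1 < lam (carrel_hi n lam i)].
Proof.
rewrite /carrel_hi; move: {2}(n - i) (erefl (n - i)) => k.
elim: k i => [|k IH] i k_def i_le_n.
  have -> : i = n by lia.
  by rewrite big_geq //; split => [|q|]; lia.
rewrite big_ltn_cond; last lia.
have [IH1 IH2 IH3] := IH i.+1 (ltac:(lia)) (ltac:(lia)).
set r := \big[minn/n]_(i.+1 <= j < n | lam j.+1 < lam j) j in IH1 IH2 IH3 *.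
case: ifP => drop_i.
  have -> : minn i r = i by lia.
  by split => [|q|]; lia.
split => // [|q q_in]; first lia.
have [i_lt_q|q_le_i] := ltnP i q; first by apply: IH2; lia.
have -> : q = i by lia.
by rewrite leqNgt drop_i.
Qed.

Lemma carrel_hi_flat n lam i y : is_partition n lam -> 1 <= i <= n ->
  i <= y <= carrel_hi n lam i -> lam y = lam (carrel_hi n lam i).
Proof.
move=> lamP /andP[i_gt0 i_le_n]; have [h_bounds no_drop _] := carrel_hi_spec lam i_le_n.
set h := carrel_hi n lam i in h_bounds no_drop *.
move: {2}(h - y) (erefl (h - y)) => k; elim: k y => [|k IH] y k_def y_in.
  by have -> : y = h by lia.
rewrite -(IH y.+1); [|lia|lia].
by have := lamP y (ltac:(lia)) (ltac:(lia)); have := no_drop y (ltac:(lia)); lia.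
Qed.

Lemma sorted_leq_last x0 (s : seq nat) z : sorted leq s -> z \in s -> z <= last x0 s.
Proof.
move=> s_sorted z_in; have s_gt0 : 0 < size s by case: (s) z_in.
rewrite -nth_last -(nth_index x0 z_in).
apply: (sorted_leq_nth leq_trans leqnn) => //; rewrite ?inE /= ?index_mem ?prednK //.
by rewrite -ltnS prednK // index_mem.
Qed.

Lemma next_crit_spec (beta : nat -> nat) lo y x : next_crit beta lo y = Some x ->
  [/\ lo < x < y, beta x + (y - x) < beta y &
      forall z, x < z < y -> beta y <= beta z + (y - z)].
Proof.
rewrite /next_crit; set P := fun x => _; set cands := iota _ _.
case: ifP => // has_P [<-].
have x_in : last 0 (filter P cands) \in filter P cands.
  by move: has_P; rewrite has_filter; case: filter => // a t _; apply: mem_last.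
move: x_in; rewrite mem_filter mem_iota => /andP[P_x x_range].
split=> [|//|z z_range]; first lia.
rewrite leqNgt; apply/negP => P_z.
have z_cand : z \in cands by rewrite mem_iota; lia.
have : z \in filter P cands by rewrite mem_filter z_cand andbT.
move=> /(sorted_leq_last 0 (sorted_filter leq_trans P (iota_sorted _ _))); rewrite -/cands; lia.
Qed.

Definition steep (beta : nat -> nat) (x y : nat) : Prop :=
  forall z, x < z <= y -> beta x + z < beta z + x.

Lemma mem_crit_chain beta lo f y x :
  x \in crit_chain beta lo y f -> x <= y /\ steep beta x y.
Proof.
elim: f y => [|f IH] y /=; rewrite inE.
  by move=> /eqP ->; split => // z; lia.
case/orP => [/eqP -> | ]; first by split => // z; lia.
case E: next_crit => [x'|] //= /IH [x_le_x' steep_x].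
have [x'_range x'_drop x'_max] := next_crit_spec E.
split=> [|z z_range]; first lia.
have x_x' : beta x + x' <= beta x' + x.
  have [x_lt_x'|x'_le_x] := ltnP x x'; first by have := steep_x x'; lia.
  by have -> : x = x' by lia.
have [z_le_x'|x'_lt_z] := leqP z x'; first by apply: steep_x; lia.
have [z_lt_y|z_ge_y] := ltnP z y; first by have := x'_max z; lia.
have -> : z = y by lia.
lia.
Qed.

Lemma xidx_steep n lam beta i : i <= carrel_hi n lam i ->
  let x := xidx n lam beta i in
  [/\ i <= x, x <= carrel_hi n lam i & steep beta x (carrel_hi n lam i)].
Proof.
rewrite /xidx /crit_indices; set h := carrel_hi n lam i => i_le_h.
set chain := crit_chain _ _ _ _.
have h_in : h \in chain by rewrite /chain; case: (h) => [|?] /=; rewrite mem_head.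
have : last h [seq x <- chain | i <= x] \in h :: [seq x <- chain | i <= x].
  exact: mem_last.
rewrite inE mem_filter => /orP[/eqP -> | /andP[i_le x_in]].
  by have [] := mem_crit_chain h_in.
by have [] := mem_crit_chain x_in.
Qed.

Section CyclePaths.

Variables (n : nat) (lam beta : nat -> nat) (m x h : nat).
Hypotheses (lamP : is_partition n lam) (betaP : upper_tuple n beta).
Hypotheses (m_gt0 : 0 < m) (m_lt_x : m < x) (x_le_h : x <= h) (h_lt_n : h < n).
Hypotheses (lam_flat : forall y, m <= y <= h -> lam y = lam h) (lam_drop : lam h.+1 < lam h).
Hypotheses (beta_x_lt_m : beta x < beta m) (beta_le_x : forall y, m < y < x -> beta y <= beta x).
Hypothesis x_steep : steep beta x h.

Definition cyc (y : nat) : nat := if (m <= y) && (y < x) then y.+1 else if y == x then m else y.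

Lemma cyc_perm : is_perm n cyc.
Proof.
rewrite /cyc; split=> [y y_range | y y' y_range y'_range].
  by case: (leqP m y) => /=; case: (ltnP y x) => /=; case: (eqVneq y x) => /=; lia.
by case: (leqP m y) => /=; case: (ltnP y x) => /=; case: (eqVneq y x) => /=;
   case: (leqP m y') => /=; case: (ltnP y' x) => /=; case: (eqVneq y' x) => /=; lia.
Qed.

Lemma cyc_x : cyc x = m.
Proof. by rewrite /cyc ltnn andbF eqxx. Qed.

Definition turn_col (y : nat) : nat :=
  if (m <= y) && (y <= h) then lam y + n - y - 1 else lam y + n - y.

Definition turn_row (y : nat) : nat :=
  if (x <= y) && (y <= h) then beta x + 1 + (y - x) else y.

Definition cyc_paths (y : nat) : seq (nat * nat) :=
  staircase (n - y, y) (turn_col y) (turn_row y) (terminal n lam beta (cyc y)).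

Variant row_shape (y c r c' r' : nat) : Prop :=
  | RowBefore of y < m & c = lam y + n - y & c' = c & r = y & r' = beta y & lam h <= lam y
  | RowShifted of m <= y < x & c = lam h + n - y - 1 & c' = c & r = y & r' = beta y.+1
      & beta y.+1 <= beta x
  | RowPivot of y = x & c = lam h + n - x - 1 & c' = lam h + n - m & r = beta x + 1 & r' = beta m
  | RowDetour of x < y <= h & c = lam h + n - y - 1 & c' = lam h + n - y
      & r = beta x + 1 + (y - x) & r' = beta y
  | RowAfter of h < y & c = lam y + n - y & c' = c & r = y & r' = beta y & lam y < lam h.

Lemma row_shapeP y : 1 <= y <= n ->
  let e := terminal n lam beta (cyc y) in
  [/\ n - y <= turn_col y <= e.1, y <= turn_row y <= e.2
    & row_shape y (turn_col y) (turn_row y) e.1 e.2].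
Proof.
move=> y_range; have lam_mono := partition_mono lamP.
have [y_le_by by_le_n] := @betaP y y_range.
have [x_le_bx bx_le_n] := @betaP x (ltac:(lia)).
have [m_le_bm bm_le_n] := @betaP m (ltac:(lia)).
have lam_m := @lam_flat m (ltac:(lia)).
rewrite /turn_col /turn_row /cyc /terminal /=.
have [y_lt_m|m_le_y] := ltnP y m; have [y_lt_x|x_le_y] := ltnP y x;
have [y_le_h|h_lt_y] := leqP y h; have [y_eq_x|y_ne_x] := eqVneq y x; rewrite /=; try lia.
- have := lam_mono y m (ltac:(lia)) (ltac:(lia)).
  by split; [lia | lia | apply: RowBefore; lia].
- have lam_y := @lam_flat y (ltac:(lia)); have lam_y1 := @lam_flat y.+1 (ltac:(lia)).
  have [y1_le_by1 by1_le_n] := @betaP y.+1 (ltac:(lia)).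
  have by1_le_bx : beta y.+1 <= beta x.
    have [y1_lt_x|x_le_y1] := ltnP y.+1 x; first by apply: beta_le_x; lia.
    by have -> : y.+1 = x by lia.
  by split; [lia | lia | apply: RowShifted; lia].
- subst y; have lam_x := @lam_flat x (ltac:(lia)).
  by split; [lia | lia | apply: RowPivot; lia].
- have lam_y := @lam_flat y (ltac:(lia)).
  have steep_y := @x_steep y (ltac:(lia)).
  by split; [lia | lia | apply: RowDetour; lia].
- have := lam_mono h.+1 y (ltac:(lia)) (ltac:(lia)).
  by split; [lia | lia | apply: RowAfter; lia].
Qed.

Lemma row_shapes_separated y c r c' r' z d s d' s' :
  0 < y < z -> z <= n -> row_shape y c r c' r' -> row_shape z d s d' s' ->
  stairs_separated c r (c', r') d s (d', s').
Proof.
move=> y_lt_z z_le_n shape_y shape_z.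
have := partition_mono lamP (ltac:(lia) : 0 < y <= z) z_le_n.
have [x_le_bx _] := @betaP x (ltac:(lia)).
rewrite /stairs_separated /=.
by case: shape_y; case: shape_z; lia.
Qed.

Lemma cyc_paths_LD : in_LD n lam beta cyc cyc_paths.
Proof.
split=> [y y_range | y z y_range z_range y_ne_z q].
  have /= [/andP[? ?] /andP[? ?] _] := row_shapeP y_range.
  by apply: staircase_lattice_path => /=; lia.
wlog y_lt_z : y z y_range z_range y_ne_z q / y < z.
  move=> sym; have [y_lt_z|z_lt_y|//] := ltngtP y z; first exact: sym.
  move=> q_y; apply/negP => q_z.
  by have := sym z y z_range y_range (nesym y_ne_z) q z_lt_y q_z; rewrite q_y.
have /= [/andP[? ?] /andP[? ?] shape_y] := row_shapeP y_range.
have /= [/andP[? ?] /andP[? ?] shape_z] := row_shapeP z_range.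
apply: staircase_disjoint => /=; try lia.
by apply: row_shapes_separated shape_y shape_z; lia.
Qed.

Lemma cycle_permutable :
  exists pi : nat -> nat,
    [/\ is_perm n pi, (exists y, 1 <= y <= n /\ pi y <> y) & exists Lam, in_LD n lam beta pi Lam].
Proof.
exists cyc; split; [exact: cyc_perm | | by exists cyc_paths; exact: cyc_paths_LD].
by exists x; rewrite cyc_x; split; lia.
Qed.

End CyclePaths.

Lemma not_in_UBP_witness n lam beta : ~ in_UBP n lam beta ->
  exists2 i, 1 <= i <= n & platform n lam beta i < beta i.
Proof.
move=> not_UBP; apply: NNPP => no_witness; apply: not_UBP => i i_range.
by rewrite leqNgt; apply/negP => lt_i; apply: no_witness; exists i.
Qed.

Lemma steep_end_lt n beta m x h : upper_tuple n beta -> 0 < m < x -> x <= h <= n ->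
  steep beta x h -> beta x < beta m -> h < n.
Proof.
move=> betaP m_range h_range x_steep bx_lt_bm.
have [_ bm_le_n] := betaP m (ltac:(lia)); have [x_le_bx _] := betaP x (ltac:(lia)).
have [x_lt_h|h_le_x] := ltnP x h; last lia.
by have := x_steep h (ltac:(lia)); have := betaP h (ltac:(lia)); lia.
Qed.

Lemma last_index_above (beta : nat -> nat) i x : i < x -> beta x < beta i ->
  exists m, [/\ i <= m < x, beta x < beta m & forall y, m < y < x -> beta y <= beta x].
Proof.
move=> i_lt_x bx_lt_bi; pose P y := (i <= y < x) && (beta x < beta y).
have P_i : exists y, P y by exists i; rewrite /P i_lt_x leqnn.
have P_le_x y : P y -> y <= x by case/andP=> /andP[_ /ltnW].
case: (ex_maxnP P_i P_le_x) => m /andP[m_range bx_lt_bm] m_max.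
exists m; split=> // y y_range; rewrite leqNgt; apply/negP => bx_lt_by.
by have := m_max y; rewrite /P bx_lt_by andbT; lia.
Qed.

Theorem lemma6p1 (n : nat) (lam beta : nat -> nat) :
  1 <= n ->
  is_partition n lam ->
  upper_tuple n beta ->
  ~ in_UBP n lam beta ->
  exists pi : nat -> nat,
    [/\ is_perm n pi,
        (exists m, 1 <= m <= n /\ pi m <> m) &
        exists Lam, in_LD n lam beta pi Lam].
Proof.
move=> _ lamP betaP /not_in_UBP_witness[i /andP[i_gt0 i_le_n]].
have [/andP[i_le_h h_le_n] _ lam_drop] := carrel_hi_spec lam i_le_n.
have [i_le_x x_le_h x_steep] := xidx_steep beta i_le_h.
rewrite /platform; set h := carrel_hi n lam i in i_le_h h_le_n lam_drop x_le_h x_steep *.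
set x := xidx n lam beta i in i_le_x x_le_h x_steep * => bx_lt_bi.
have i_lt_x : i < x.
  by rewrite ltn_neqAle i_le_x andbT; apply: contraTneq bx_lt_bi => ->; rewrite ltnn.
have [m [m_range bx_lt_bm beta_le_x]] := last_index_above i_lt_x bx_lt_bi.
have h_lt_n : h < n by apply: steep_end_lt betaP _ _ x_steep bx_lt_bm; lia.
apply: (cycle_permutable lamP betaP _ _ x_le_h h_lt_n _ (lam_drop h_lt_n) bx_lt_bm
                         beta_le_x x_steep) => [| | y y_range]; [lia | lia |].
by apply: carrel_hi_flat => //; lia.
Qed.
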